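(* For $1\le r\le n$, $$b_{n,2}(\Delta_{n-r})=\frac{n!}{(n-r)!}.$$
   Context: $B_n^+$ is the positive braid monoid with generators $\sigma_1,\dots,\sigma_{n-1}$ and relations $\sigma_i\sigma_j=\sigma_j\sigma_i$ ($|i-j|\ge2$), $\sigma_i\sigma_j\sigma_i=\sigma_j\sigma_i\sigma_j$ ($|i-j|=1$). $\Delta_1=1$, $\Delta_m=\sigma_1\cdots\sigma_{m-1}\Delta_{m-1}$, with the convention $\Delta_0=1$; $\Delta_m$ is viewed in $B_n^+$ for $m\le n$. Simple $n$-braids are the left (equivalently right) divisors of $\Delta_n$ in $B_n^+$. For simple $x$, $D_L(x)$ (resp. $D_R(x)$) is the set of $i\in\{1,\dots,n-1\}$ with $\sigma_i$ a left (resp. right) divisor of $x$. A sequence $(x_1,\dots,x_d)$ of simple $n$-braids is normal if $x_k=\gcd(\Delta_n,x_k\cdots x_d)$ (greatest common left divisor) for each $k$; equivalently $D_R(x_k)\supseteq D_L(x_{k+1})$ for all $k<d$. For a simple $n$-braid $x$, $b_{n,d}(x)$ is the number of normal sequences $(x_1,\dots,x_{d-1},x)$ of simple $n$-braids. *)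

(* Positive braid monoid B_n^+ modelled literally:
   elements are words over the generators sigma_1..sigma_{n-1} (encoded as the
   naturals 1..n-1) modulo the congruence generated by the braid relations. *)
From Stdlib Require Import Relations.Relation_Operators.
From mathcomp Require Import all_boot.
Set Implicit Arguments. Unset Strict Implicit. Unset Printing Implicit Defensive.

Definition is_gen (n i : nat) : bool := (0 < i) && (i < n).

Definition bword (n : nat) (w : seq nat) : bool := all (is_gen n) w.

Inductive braid_step (n : nat) : seq nat -> seq nat -> Prop :=
| bs_comm (u v : seq nat) (i j : nat) :
    is_gen n i -> is_gen n j -> (i + 2 <= j) || (j + 2 <= i) ->
    braid_step n (u ++ [:: i; j] ++ v) (u ++ [:: j; i] ++ v)
| bs_braid (u v : seq nat) (i j : nat) :
    is_gen n i -> is_gen n j -> (i == j + 1) || (j == i + 1) ->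
    braid_step n (u ++ [:: i; j; i] ++ v) (u ++ [:: j; i; j] ++ v).

Definition beq (n : nat) : seq nat -> seq nat -> Prop :=
  clos_refl_sym_trans (seq nat) (braid_step n).

Fixpoint delta (m : nat) : seq nat :=
  match m with
  | 0 => [::]
  | m'.+1 => iota 1 m' ++ delta m'
  end.

Definition simple_braid (n : nat) (x : seq nat) : Prop :=
  bword n x /\ exists u, bword n u /\ beq n (x ++ u) (delta n).

Definition in_DL (n : nat) (x : seq nat) (i : nat) : Prop :=
  exists u, bword n u /\ beq n x (i :: u).
Definition in_DR (n : nat) (x : seq nat) (i : nat) : Prop :=
  exists u, bword n u /\ beq n x (rcons u i).

Definition normal_pair (n : nat) (x1 x2 : seq nat) : Prop :=
  forall i, is_gen n i -> in_DL n x2 i -> in_DR n x1 i.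

(* The number of elements of B_n^+ (classes of words under beq) satisfying
   the beq-invariant predicate P is k: there is a list of k pairwise
   non-equal representatives satisfying P, and every word satisfying P is
   equal in B_n^+ to one of them. *)
Definition card_braids (n : nat) (P : seq nat -> Prop) (k : nat) : Prop :=
  exists s : seq (seq nat),
    [/\ size s = k,
        (forall w, w \in s -> P w),
        (forall a b, a < b < size s -> ~ beq n (nth [::] s a) (nth [::] s b))
      & (forall w, P w -> exists2 w', w' \in s & beq n w w')].

Definition b_n2_is (n : nat) (x : seq nat) (k : nat) : Prop :=
  card_braids n (fun x1 => simple_braid n x1 /\ normal_pair n x1 x) k.

From Stdlib Require Import Relations.Relation_Operators.
From mathcomp Require Import all_boot zify fingroup perm.
Set Implicit Arguments. Unset Strict Implicit. Unset Printing Implicit Defensive.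

(* Sending sigma_a to the transposition of the strands a-1 and a maps a word w to a
   permutation of {0, ..., n-1}; w is reduced when its length is the number of
   inversions of that permutation. By Matsumoto's theorem, reduced words with the
   same permutation are equal in B_n^+. The simple braids are exactly the reduced
   words, and sigma_i is a right descent of a simple braid iff its permutation p
   has p i < p (i-1). As D_L(Delta_k) = {1, ..., k-1}, the simple x making
   (x, Delta_(n-r)) normal correspond to the permutations decreasing on the first
   n-r positions. Such a permutation is determined by its values on the last r
   positions, which form an arbitrary injection, whence n!/(n-r)! of them. *)

(** * Words and permutations *)

(* Strands are numbered 0, ..., n-1, so sigma_a exchanges the strands a-1 and a. *)
Definition adj_swap (a x : nat) : nat :=
  if x == a.-1 then a else if x == a then a.-1 else x.

Ltac adj_swap_lia := rewrite /adj_swap; repeat (case: eqP => /=; try lia); try lia.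

Lemma adj_swapK a : involutive (adj_swap a).
Proof. by move=> x; adj_swap_lia. Qed.

Lemma adj_swap_pred a : adj_swap a a.-1 = a.
Proof. by adj_swap_lia. Qed.

Lemma adj_swap_self a : adj_swap a a = a.-1.
Proof. by adj_swap_lia. Qed.

Lemma adj_swap_fix a x : x != a.-1 -> x != a -> adj_swap a x = x.
Proof. by rewrite /adj_swap => /negbTE-> /negbTE->. Qed.

Lemma adj_swap_lt n a x : 0 < a < n -> x < n -> adj_swap a x < n.
Proof. by move=> ? ?; adj_swap_lia. Qed.

Lemma adj_swapC a b x : 0 < a -> 0 < b -> (a + 2 <= b) || (b + 2 <= a) ->
  adj_swap a (adj_swap b x) = adj_swap b (adj_swap a x).
Proof. by move=> ? ? /orP[?|?]; adj_swap_lia. Qed.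

Lemma adj_swap_braid a x : 0 < a ->
  adj_swap a (adj_swap a.+1 (adj_swap a x)) = adj_swap a.+1 (adj_swap a (adj_swap a.+1 x)).
Proof. by move=> ?; adj_swap_lia. Qed.

Fixpoint word_perm (w : seq nat) : nat -> nat :=
  if w is a :: w' then adj_swap a \o word_perm w' else id.

Lemma word_perm_cat u v x : word_perm (u ++ v) x = word_perm u (word_perm v x).
Proof. by elim: u => //= a u ->. Qed.

Lemma word_perm_rcons u a x : word_perm (rcons u a) x = word_perm u (adj_swap a x).
Proof. by rewrite -cats1 word_perm_cat. Qed.

Lemma word_perm_rcons_swap w a : word_perm w =1 word_perm (rcons w a) \o adj_swap a.
Proof. by move=> x; rewrite /= word_perm_rcons adj_swapK. Qed.

Lemma word_perm_revK w x : word_perm (rev w) (word_perm w x) = x.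
Proof.
elim: w x => [|a w IH] x //=.
by rewrite rev_cons word_perm_rcons /= adj_swapK.
Qed.

Lemma bword_cat n u v : bword n (u ++ v) = bword n u && bword n v.
Proof. exact: all_cat. Qed.

Lemma bword_rcons n w a : bword n (rcons w a) = bword n w && is_gen n a.
Proof. by rewrite /bword all_rcons andbC. Qed.

Lemma bword_rev n w : bword n (rev w) = bword n w.
Proof. exact: all_rev. Qed.

Section BraidEquality.
Variable n : nat.

Lemma beq_refl u : beq n u u.
Proof. exact: rst_refl. Qed.

Lemma beq_sym u v : beq n u v -> beq n v u.
Proof. exact: rst_sym. Qed.

Lemma beq_trans u v w : beq n u v -> beq n v w -> beq n u w.
Proof. exact: rst_trans. Qed.

Lemma beq_step u v : braid_step n u v -> beq n u v.
Proof. exact: rst_step. Qed.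

Lemma beq_invariant T (g : seq nat -> T) :
  (forall u v, braid_step n u v -> g u = g v) -> forall u v, beq n u v -> g u = g v.
Proof. by move=> Hg u v; elim=> [? ? /Hg|//|? ? _ ->|? ? ? _ -> _ ->]. Qed.

Lemma beq_map (F : seq nat -> seq nat) :
  (forall u v, braid_step n u v -> braid_step n (F u) (F v)) ->
  forall u v, beq n u v -> beq n (F u) (F v).
Proof.
move=> HF u v; elim=> [? ? /HF/beq_step //|*|? ? _ /beq_sym //|? ? ? _ H1 _ H2].
- exact: beq_refl.
- exact: beq_trans H1 H2.
Qed.

Lemma beq_word_perm u v : beq n u v -> word_perm u =1 word_perm v.
Proof.
move=> Huv x; apply: (@beq_invariant _ (word_perm^~ x) _ u v Huv) => {u v Huv}.
move=> ? ? [] u' v' i j /andP[i0 _] /andP[j0 _] Hij; rewrite !word_perm_cat /=.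
  by rewrite adj_swapC.
by case/orP: Hij => /eqP ->; rewrite addn1 adj_swap_braid.
Qed.

Lemma beq_size u v : beq n u v -> size u = size v.
Proof. by apply: (@beq_invariant _ size) => ? ? [] *; rewrite !size_cat. Qed.

Lemma beq_catr w u v : beq n u v -> beq n (u ++ w) (v ++ w).
Proof.
apply: (@beq_map (cat^~ w)) => ? ? [] u' v' i j Hi Hj Hij; rewrite -!catA.
  exact: (bs_comm _ (v' ++ w)).
exact: (bs_braid _ (v' ++ w)).
Qed.

Lemma beq_rcons a u v : beq n u v -> beq n (rcons u a) (rcons v a).
Proof. by rewrite -!cats1; apply: beq_catr. Qed.

Lemma beq_rev u v : beq n u v -> beq n (rev u) (rev v).
Proof.
apply: (@beq_map rev) => ? ? [] u' v' i j Hi Hj Hij; rewrite !rev_cat /= -!catA /=.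
  by apply: (bs_comm (rev v') (rev u') Hj Hi); rewrite orbC.
exact: (bs_braid (rev v') (rev u') Hi Hj).
Qed.

End BraidEquality.

(** * Inversions and reduced words *)

Definition eq_below n (f g : nat -> nat) := forall x, x < n -> f x = g x.

Definition perm_below n (f : nat -> nat) :=
  (forall x, x < n -> f x < n) /\
  (forall x y, x < n -> y < n -> f x = f y -> x = y).

Definition inversions n (f : nat -> nat) : nat :=
  \sum_(i < n) \sum_(j < n) ((i < j) && (f j < f i)).

Section Inversions.
Variable n : nat.
Implicit Type f : nat -> nat.

Lemma eq_inversions f g : eq_below n f g -> inversions n f = inversions n g.
Proof. by move=> fg; apply: eq_bigr => i _; apply: eq_bigr => j _; rewrite !fg. Qed.

Lemma inversions_id : inversions n id = 0.
Proof.
rewrite /inversions big1 // => i _; rewrite big1 // => j _.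
by case: ltnP => //= H; rewrite ltnNge ltnW.
Qed.

(* Precomposing with the transposition t = (a-1 a) permutes the pairs of
   positions and preserves their order, except for the pair (a-1, a). *)
Lemma inversions_adj_swap f a : 0 < a < n ->
  inversions n (f \o adj_swap a) + (f a < f a.-1) = inversions n f + (f a.-1 < f a).
Proof.
case/andP=> a0 an; have a'n : a.-1 < n by lia.
pose oa := Ordinal an; pose oa' := Ordinal a'n; pose t := tperm oa' oa.
have tE (i : 'I_n) : adj_swap a i = t i.
  rewrite /t; case: tpermP => [->|->|ia' ia] /=; [adj_swap_lia|adj_swap_lia|].
  have ia'_nat : i <> a.-1 :> nat by move=> E; apply: ia'; apply: val_inj.
  have ia_nat : i <> a :> nat by move=> E; apply: ia; apply: val_inj.
  adj_swap_lia.
have -> : inversions n (f \o adj_swap a) =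
    \sum_(i < n) \sum_(j < n) ((t i < t j) && (f j < f i)).
  rewrite /inversions (reindex_inj (@perm_inj _ t)); apply: eq_bigr => i _.
  rewrite (reindex_inj (@perm_inj _ t)); apply: eq_bigr => j _.
  by rewrite /= !tE !tpermK.
have neq : (oa, oa') != (oa', oa) by apply/eqP => -[]; lia.
rewrite /inversions !pair_bigA /= (bigD1 (oa', oa)) 1?(bigD1 (oa, oa')) //= 1?eq_sym //.
rewrite [in RHS](bigD1 (oa', oa)) 1?[in RHS](bigD1 (oa, oa')) //= 1?eq_sym //.
rewrite !tpermL !tpermR /=.
have -> : \sum_(p | (p != (oa', oa)) && (p != (oa, oa')))
      ((t p.1 < t p.2) && (f p.2 < f p.1)) =
    \sum_(p | (p != (oa', oa)) && (p != (oa, oa'))) ((p.1 < p.2) && (f p.2 < f p.1)).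
  apply: eq_bigr => -[i j] /andP[ij ji] /=; rewrite -!tE; congr (_ && _).
  have {}ij : ~ (i = a.-1 :> nat /\ j = a :> nat).
    by case=> ia ja; move: ij; rewrite xpair_eqE -!(inj_eq val_inj) /= ia ja !eqxx.
  have {}ji : ~ (i = a :> nat /\ j = a.-1 :> nat).
    by case=> ia ja; move: ji; rewrite xpair_eqE -!(inj_eq val_inj) /= ia ja !eqxx.
  adj_swap_lia.
have -> : a.-1 < a by lia.
have -> : a < a.-1 = false by lia.
by rewrite /= !addnA; case: (f a < f a.-1); case: (f a.-1 < f a) => /=; lia.
Qed.

Lemma inversions_adj_swap_desc f a : 0 < a < n -> f a < f a.-1 ->
  (inversions n (f \o adj_swap a)).+1 = inversions n f.
Proof.
move=> Ha fa; have := inversions_adj_swap f Ha.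
by rewrite fa ltnNge ltnW //= addn0 addn1.
Qed.

Lemma inversions_adj_swap_asc f a : 0 < a < n -> f a.-1 < f a ->
  inversions n (f \o adj_swap a) = (inversions n f).+1.
Proof.
move=> Ha fa; have := inversions_adj_swap f Ha.
by rewrite fa ltnNge ltnW //= addn0 addn1.
Qed.

Lemma inversions_word_perm_le f w : bword n w ->
  inversions n (f \o word_perm w) <= inversions n f + size w.
Proof.
elim/last_ind: w => [|w a IH]; first by rewrite addn0.
rewrite bword_rcons size_rcons => /andP[/IH Hw Ha].
rewrite (@eq_inversions _ ((f \o word_perm w) \o adj_swap a)); last first.
  by move=> x _; rewrite /= word_perm_rcons.
have := inversions_adj_swap (f \o word_perm w) Ha; lia.
Qed.

Lemma inversions_word_perm w : bword n w -> inversions n (word_perm w) <= size w.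
Proof. by move/(inversions_word_perm_le id); rewrite inversions_id. Qed.

Lemma perm_below_adj_swap f a : perm_below n f -> 0 < a < n -> perm_below n (f \o adj_swap a).
Proof.
move=> [f_lt f_inj] Ha; split=> [x xn|x y xn yn /= E]; first exact/f_lt/adj_swap_lt.
by rewrite -[x](adj_swapK a) -[y](adj_swapK a) (f_inj _ _ (adj_swap_lt Ha xn) (adj_swap_lt Ha yn) E).
Qed.

Lemma perm_below_word_perm w : bword n w -> perm_below n (word_perm w).
Proof.
elim/last_ind: w => [|w a IH]; first by split.
rewrite bword_rcons => /andP[/IH Hw Ha].
have [f_lt f_inj] := perm_below_adj_swap Hw Ha.
by split=> [x xn|x y xn yn]; rewrite !word_perm_rcons; [apply: f_lt|apply: f_inj].
Qed.

Lemma perm_below_increasing_id f : perm_below n f ->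
  (forall a, 0 < a < n -> f a.-1 < f a) -> eq_below n f id.
Proof.
move=> [f_lt _] f_incr.
have f_gap d i : i + d < n -> f i + d <= f (i + d).
  elim: d => [|d IH] Hd; first by rewrite !addn0.
  have := IH (ltac:(lia)); have := f_incr (i + d).+1 (ltac:(lia)); rewrite /= !addnS; lia.
move=> x xn; apply/eqP; rewrite eqn_leq; apply/andP; split.
  by have := f_gap (n - x.+1) x (ltac:(lia)); have := f_lt (x + (n - x.+1)) (ltac:(lia)); lia.
by have := f_gap x 0 (ltac:(lia)); rewrite add0n; lia.
Qed.

Lemma perm_below_descent_or_id f : perm_below n f ->
  (exists2 a, 0 < a < n & f a < f a.-1) \/ eq_below n f id.
Proof.
move=> Hf; case: (boolP [exists a : 'I_n, (0 < a) && (f a < f a.-1)]).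
  by case/existsP => a /andP[a0 fa]; left; exists a; rewrite ?a0 ?ltn_ord.
move/existsPn => no_desc; right; apply: perm_below_increasing_id => // a /andP[a0 an].
have := no_desc (Ordinal an); rewrite /= a0 -leqNgt leq_eqVlt => /orP[/eqP E|//].
by case: Hf => _ /(_ a a.-1 an (ltac:(lia)) (esym E)); lia.
Qed.

End Inversions.

Definition reduced n w := bword n w /\ inversions n (word_perm w) = size w.

Lemma reduced_rcons n w a : is_gen n a ->
  reduced n (rcons w a) <-> reduced n w /\ word_perm w a.-1 < word_perm w a.
Proof.
move=> Ha; rewrite /reduced bword_rcons Ha andbT size_rcons.
rewrite (@eq_inversions _ _ (word_perm w \o adj_swap a)); last first.
  by move=> x _; rewrite word_perm_rcons.
split=> [[Bw Iw]|[[Bw Iw] asc]]; last by rewrite inversions_adj_swap_asc // Iw.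
have := inversions_adj_swap (word_perm w) Ha; have := inversions_word_perm Bw.
by rewrite Iw; case: (_ < _); case: (_ < _) => /=; lia.
Qed.

Lemma reduced_is_gen n w a : reduced n (rcons w a) -> is_gen n a.
Proof. by case; rewrite bword_rcons => /andP[]. Qed.

Lemma reduced_rcons_desc n w a : reduced n (rcons w a) ->
  word_perm (rcons w a) a < word_perm (rcons w a) a.-1.
Proof.
move=> Hwa; have [_ asc] := (reduced_rcons w (reduced_is_gen Hwa)).1 Hwa.
by rewrite !word_perm_rcons adj_swap_self adj_swap_pred.
Qed.

Lemma reduced_rcons_asc n z c h : reduced n z -> is_gen n c ->
  eq_below n (word_perm z) h -> h c.-1 < h c ->
  reduced n (rcons z c) /\ eq_below n (word_perm (rcons z c)) (h \o adj_swap c).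
Proof.
move=> Hz Gc Ez asc; have Ezc : eq_below n (word_perm (rcons z c)) (h \o adj_swap c).
  by move=> u un; rewrite word_perm_rcons Ez // adj_swap_lt.
split=> //; apply/reduced_rcons => //; split=> //.
by case/andP: Gc => c0 cn; rewrite !Ez //; lia.
Qed.

Lemma reduced_word_exists n f : perm_below n f ->
  exists2 w, reduced n w & eq_below n (word_perm w) f.
Proof.
move Hk : (inversions n f) => k; elim: k f Hk => [|k IH] f Hk Hf.
all: have [[a Ha fa]|f_id] := perm_below_descent_or_id Hf; last first.
- by exists [::]; rewrite /reduced /= ?inversions_id // => x xn; rewrite f_id.
- by have := inversions_adj_swap_desc Ha fa; lia.
- by rewrite (eq_inversions f_id) inversions_id in Hk.
have [|w Hw Ew] := IH (f \o adj_swap a) _ (perm_below_adj_swap Hf Ha).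
  by have := inversions_adj_swap_desc Ha fa; lia.
have [|Hwa Ewa] := reduced_rcons_asc Hw Ha Ew; first by rewrite /= adj_swap_pred adj_swap_self.
by exists (rcons w a) => // x xn; rewrite Ewa //= adj_swapK.
Qed.

(** * Matsumoto's theorem *)

(* Both words end in a descent of their common permutation p. For a reduced word z
   of p \o adj_swap a \o adj_swap b (resp. of p \o adj_swap a \o adj_swap b \o
   adj_swap a), the induction hypothesis turns them into z b a and z a b (resp.
   z a b a and z b a b), which are related by a defining relation. *)
Section MatsumotoStep.
Variables (n m : nat).
Hypothesis IH : forall u v, reduced n u -> reduced n v -> size u = m ->
  eq_below n (word_perm u) (word_perm v) -> beq n u v.

Variables (x y : seq nat) (a b : nat).
Hypotheses (Hxa : reduced n (rcons x a)) (Hyb : reduced n (rcons y b)) (Sx : size x = m).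
Let p := word_perm (rcons x a).
Hypothesis Exy : eq_below n p (word_perm (rcons y b)).

Let Ga : is_gen n a := reduced_is_gen Hxa.
Let Gb : is_gen n b := reduced_is_gen Hyb.
Let Hx : reduced n x := ((reduced_rcons x Ga).1 Hxa).1.
Let Hy : reduced n y := ((reduced_rcons y Gb).1 Hyb).1.
Let Pp : perm_below n p := perm_below_word_perm Hxa.1.
Let desc_a : p a < p a.-1 := reduced_rcons_desc Hxa.
Let desc_b : p b < p b.-1.
Proof.
by case/andP: Gb => b0 bn; rewrite !Exy ?(reduced_rcons_desc Hyb) //; lia.
Qed.

Let Ex : eq_below n (word_perm x) (p \o adj_swap a).
Proof. by move=> z _; apply: word_perm_rcons_swap. Qed.

Let Ey : eq_below n (word_perm y) (p \o adj_swap b).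
Proof.
by move=> z zn; rewrite (word_perm_rcons_swap y b) /= Exy // adj_swap_lt.
Qed.

Let Sy : size y = m.
Proof.
have := Hyb.2; rewrite -(eq_inversions Exy) Hxa.2 !size_rcons Sx; lia.
Qed.

Lemma matsumoto_step_same : a = b -> beq n (rcons x a) (rcons y b).
Proof.
by move=> ab; rewrite -ab; apply/beq_rcons/IH => // u un; rewrite Ex // Ey // ab.
Qed.

Lemma matsumoto_step_far : (a + 2 <= b) || (b + 2 <= a) -> beq n (rcons x a) (rcons y b).
Proof.
move=> far; case/andP: (Ga) => a0 an; case/andP: (Gb) => b0 bn.
pose g := p \o adj_swap a \o adj_swap b.
have [gb' gb ga' ga] : [/\ g b.-1 = p b, g b = p b.-1, g a.-1 = p a & g a = p a.-1].
  by rewrite /g /=; split; congr p; adj_swap_lia.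
have [z Hz Ez] : exists2 z, reduced n z & eq_below n (word_perm z) g.
  by apply/reduced_word_exists/perm_below_adj_swap/Gb/perm_below_adj_swap.
have [|Hzb Ezb] := reduced_rcons_asc Hz Gb Ez; first by rewrite gb' gb.
have [|Hza Eza] := reduced_rcons_asc Hz Ga Ez; first by rewrite ga' ga.
have x_zb : beq n x (rcons z b).
  by apply: IH => // u un; rewrite Ex // Ezb // /g /= adj_swapK.
have y_za : beq n y (rcons z a).
  by apply: IH => // u un; rewrite Ey // Eza // /g /= adj_swapC // adj_swapK.
apply: beq_trans (beq_rcons a x_zb) _; apply: beq_sym.
apply: beq_trans (beq_rcons b y_za) _; rewrite -!cats1 -!catA.
by apply/beq_step/(bs_comm z [::]).
Qed.

Lemma matsumoto_step_adjacent : b = a.+1 -> beq n (rcons x a) (rcons y b).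
Proof.
move=> ba; case/andP: (Ga) => a0 an; have Ga1 : is_gen n a.+1 by rewrite -ba.
have desc_a1 : p a.+1 < p a by move: desc_b; rewrite ba.
pose g := p \o adj_swap a \o adj_swap a.+1 \o adj_swap a.
have [ga' ga ga1] : [/\ g a.-1 = p a.+1, g a = p a & g a.+1 = p a.-1].
  by rewrite /g /=; split; congr p; adj_swap_lia.
have [z Hz Ez] : exists2 z, reduced n z & eq_below n (word_perm z) g.
  apply/reduced_word_exists/perm_below_adj_swap/Ga/perm_below_adj_swap/Ga1.
  exact/perm_below_adj_swap.
have [|Hza Eza] := reduced_rcons_asc Hz Ga Ez; first by rewrite ga' ga.
have [|Hzaa Ezaa] := reduced_rcons_asc Hza Ga1 Eza.
  by rewrite /= adj_swap_self adj_swap_fix ?ga' ?ga1; lia.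
have [|Hzb Ezb] := reduced_rcons_asc Hz Ga1 Ez; first by rewrite ga ga1.
have [|Hzba Ezba] := reduced_rcons_asc Hzb Ga Ezb.
  by rewrite /= (adj_swap_pred a.+1) adj_swap_fix ?ga' ?ga1; lia.
have x_zaa : beq n x (rcons (rcons z a) a.+1).
  by apply: IH => // u un; rewrite Ex // Ezaa // /g /= !adj_swapK.
have y_zba : beq n y (rcons (rcons z a.+1) a).
  by apply: IH => // u un; rewrite Ey // Ezba // /g /= adj_swap_braid // !adj_swapK ba.
apply: beq_trans (beq_rcons a x_zaa) _; apply: beq_sym; rewrite ba.
apply: beq_trans (beq_rcons a.+1 y_zba) _; rewrite -!cats1 -!catA.
by apply/beq_step/(bs_braid z [::]) => //; lia.
Qed.
End MatsumotoStep.

Theorem matsumoto n u v : reduced n u -> reduced n v ->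
  eq_below n (word_perm u) (word_perm v) -> beq n u v.
Proof.
move Hm : (size u) => m; elim: m u v Hm => [|m IH] u v Su Hu Hv E.
  have Sv : size v = 0 by rewrite -Hv.2 -(eq_inversions E) Hu.2.
  by rewrite (size0nil Su) (size0nil Sv); apply: beq_refl.
case/lastP: u Su Hu E => [//|x a]; rewrite size_rcons => -[Sx] Hxa E.
case/lastP: v Hv E => [|y b] Hyb E.
  by have := Hyb.2; rewrite -(eq_inversions E) Hxa.2 size_rcons.
have {}IH u' v' Hu' Hv' Su' := IH u' v' Su' Hu' Hv'.
have [ab|ne] := eqVneq a b; first exact: (matsumoto_step_same IH Hxa Hyb Sx E).
have [ba|[ab|far]] : b = a.+1 \/ a = b.+1 \/ (a + 2 <= b) || (b + 2 <= a) by lia.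
- exact: (matsumoto_step_adjacent IH Hxa Hyb Sx E).
- apply/beq_sym/(matsumoto_step_adjacent IH Hyb Hxa) => // [|z zn].
  + by have := Hxa.2; rewrite (eq_inversions E) Hyb.2 !size_rcons Sx => -[].
  + by rewrite E.
- exact: (matsumoto_step_far IH Hxa Hyb Sx E).
Qed.

(** * Descents and simple braids *)

Lemma in_DR_reduced n w i : reduced n w -> is_gen n i ->
  in_DR n w i <-> word_perm w i < word_perm w i.-1.
Proof.
move=> Hw Gi; case/andP: (Gi) => i0 iN; split=> [[u [Bu wu]]|desc].
  have Hui : reduced n (rcons u i).
    split; first by rewrite bword_rcons Bu Gi.
    rewrite -(beq_size wu) -Hw.2; apply: eq_inversions => x _.
    by rewrite (beq_word_perm wu).
  by rewrite !(beq_word_perm wu); apply: reduced_rcons_desc Hui.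
have [z Hz Ez] := reduced_word_exists (perm_below_adj_swap (perm_below_word_perm Hw.1) Gi).
have [|Hzi Ezi] := reduced_rcons_asc Hz Gi Ez; first by rewrite /= adj_swap_pred adj_swap_self.
exists z; split; first exact: Hz.1.
by apply: matsumoto => // x xn; rewrite Ezi //= adj_swapK.
Qed.

Lemma in_DL_rev n w i : in_DL n w i <-> in_DR n (rev w) i.
Proof.
split=> -[u [Bu wu]]; exists (rev u); rewrite bword_rev; split=> //.
  by move/beq_rev: wu; rewrite rev_cons.
by move/beq_rev: wu; rewrite revK rev_rcons.
Qed.

Definition rev_below k x := if x < k then k - x.+1 else x.

Lemma rev_belowK k : involutive (rev_below k).
Proof. by move=> x; rewrite /rev_below; case: (ltnP x k) => xk; [rewrite ifT; lia|rewrite ltnNge xk]. Qed.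

Lemma word_perm_iota m x :
  word_perm (iota 1 m) x = if x < m then x.+1 else if x == m then 0 else x.
Proof.
elim: m x => [|m IH] x; first by case: x.
rewrite -[m.+1]addn1 iotaD cats1 word_perm_rcons IH /adj_swap /= add1n.
by repeat case: ifP; repeat case: eqP; lia.
Qed.

Lemma word_perm_delta k : word_perm (delta k) =1 rev_below k.
Proof.
elim: k => [|k IH] x /=; first by rewrite /rev_below.
rewrite word_perm_cat IH word_perm_iota /rev_below.
by repeat case: ifP; repeat case: eqP; lia.
Qed.

Lemma word_perm_rev_delta k : word_perm (rev (delta k)) =1 rev_below k.
Proof. by move=> x; rewrite -{1}(rev_belowK k x) -word_perm_delta word_perm_revK. Qed.

Lemma size_delta k : size (delta k) = \sum_(j < k) j.
Proof.
elim: k => [|k IH]; first by rewrite big_ord0.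
by rewrite /= size_cat size_iota IH big_ord_recr /= addnC.
Qed.

Lemma sum_ltn n j : \sum_(i < n) (i < j) = minn n j.
Proof.
elim: n => [|n IH]; first by rewrite big_ord0 min0n.
by rewrite big_ord_recr /= IH; case: ltnP; lia.
Qed.

Lemma inversions_rev_below n k : k <= n -> inversions n (rev_below k) = \sum_(j < k) j.
Proof.
move=> kn; rewrite /inversions exchange_big /= (big_ord_widen _ (fun j => j) kn).
rewrite [RHS]big_mkcond /=; apply: eq_bigr => j _.
rewrite (eq_bigr (fun i : 'I_n => (j < k) * (i < j))) => [|i _]; last first.
  by rewrite /rev_below; case: (ltnP i j) => ij; case: (ltnP j k); case: (ltnP i k) => //=; lia.
rewrite -big_distrr /= sum_ltn.
by have := ltn_ord j; case: (j < k); lia.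
Qed.

Lemma bword_delta n k : k <= n -> bword n (delta k).
Proof.
elim: k => [|k IH] //= kn; rewrite bword_cat IH ?andbT; last lia.
by apply/allP => x; rewrite mem_iota /is_gen; lia.
Qed.

Lemma reduced_delta n k : k <= n -> reduced n (delta k).
Proof.
move=> kn; split; first exact: bword_delta.
by rewrite size_delta -(inversions_rev_below kn); apply: eq_inversions => x _; apply: word_perm_delta.
Qed.

Lemma reduced_rev_delta n k : k <= n -> reduced n (rev (delta k)).
Proof.
move=> kn; have [Bd Id] := reduced_delta kn; split; first by rewrite bword_rev.
by rewrite size_rev -Id; apply: eq_inversions => x _; rewrite word_perm_rev_delta word_perm_delta.
Qed.

Lemma in_DL_delta n k i : k <= n -> is_gen n i -> in_DL n (delta k) i <-> i < k.
Proof.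
move=> kn Gi; rewrite in_DL_rev (in_DR_reduced (reduced_rev_delta kn) Gi).
rewrite !word_perm_rev_delta /rev_below; case/andP: Gi => i0 _.
by split; repeat case: ifP; lia.
Qed.

Lemma simple_braid_reduced n w : simple_braid n w -> reduced n w.
Proof.
case=> Bw [u [Bu wu_delta]]; split=> //.
have Iwu : inversions n (word_perm (w ++ u)) = size (w ++ u).
  rewrite (beq_size wu_delta) -(reduced_delta (leqnn n)).2.
  by apply: eq_inversions => x _; apply: beq_word_perm wu_delta x.
have Ewu : inversions n (word_perm w \o word_perm u) = size w + size u.
  by rewrite -size_cat -Iwu; apply: eq_inversions => x _; rewrite word_perm_cat.
have := inversions_word_perm_le (word_perm w) Bu; have := inversions_word_perm Bw.
by rewrite Ewu; lia.
Qed.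

Lemma inversions_le_rev_below n f : inversions n f <= inversions n (rev_below n).
Proof.
have -> : inversions n (rev_below n) = \sum_(i < n) \sum_(j < n) (i < j).
  apply: eq_bigr => i _; apply: eq_bigr => j _; rewrite /rev_below.
  by have := ltn_ord i; have := ltn_ord j; repeat case: ifP; lia.
by apply: leq_sum => i _; apply: leq_sum => j _; case: (i < j); case: (f j < f i).
Qed.

Lemma perm_below_ascent_or_rev n f : perm_below n f ->
  (exists2 a, 0 < a < n & f a.-1 < f a) \/ eq_below n f (rev_below n).
Proof.
move=> [f_lt f_inj].
have Hg : perm_below n (fun x => n - (f x).+1).
  split=> [x xn|x y xn yn E]; first by have := f_lt x xn; lia.
  by apply: f_inj => //; have := f_lt x xn; have := f_lt y yn; lia.
have [[a Ha desc]|g_id] := perm_below_descent_or_id Hg.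
  by left; exists a => //; have := f_lt a (ltac:(lia)); have := f_lt a.-1 (ltac:(lia)); lia.
by right => x xn; have := g_id x xn; have := f_lt x xn; rewrite /rev_below xn; lia.
Qed.

Lemma reduced_extend n x : reduced n x ->
  exists u, reduced n (x ++ u) /\ eq_below n (word_perm (x ++ u)) (rev_below n).
Proof.
move Hd : (inversions n (rev_below n) - size x) => d.
elim: d x Hd => [|d IH] x Hd Hx.
all: have [[a Ha asc]|x_rev] := perm_below_ascent_or_rev (perm_below_word_perm Hx.1);
  last by exists [::]; rewrite cats0.
all: have Hxa : reduced n (rcons x a) by apply/reduced_rcons.
  by have := inversions_le_rev_below n (word_perm (rcons x a)); rewrite Hxa.2 size_rcons; lia.
have [|u [Hu Eu]] := IH (rcons x a) _ Hxa; first by rewrite size_rcons; lia.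
by exists (a :: u); rewrite -cat_rcons.
Qed.

Lemma simple_braidE n w : simple_braid n w <-> reduced n w.
Proof.
split=> [|Hw]; first exact: simple_braid_reduced.
have [u [Hwu Ewu]] := reduced_extend Hw.
split; first exact: Hw.1.
exists u; split; first by move: Hwu.1; rewrite bword_cat => /andP[].
by apply: (matsumoto Hwu (reduced_delta (leqnn n))) => x xn; rewrite Ewu // word_perm_delta.
Qed.

Lemma normal_pair_delta n k w : k <= n -> reduced n w ->
  normal_pair n w (delta k) <-> forall a, 0 < a < k -> word_perm w a < word_perm w a.-1.
Proof.
move=> kn Hw; split=> [w_delta a Ha|desc i Gi /(in_DL_delta kn Gi) ik].
  have Ga : is_gen n a by rewrite /is_gen; lia.
  by apply/(in_DR_reduced Hw Ga)/w_delta/(in_DL_delta kn Ga) => //; lia.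
by apply/(in_DR_reduced Hw Gi)/desc; case/andP: Gi; lia.
Qed.

(** * Counting *)

Lemma nth_choice U (u0 : U) (R : nat -> U -> Prop) m :
  (forall i, i < m -> exists u, R i u) ->
  exists2 s, size s = m & forall i, i < m -> R i (nth u0 s i).
Proof.
elim: m => [|m IH] HR; first by exists [::].
have [s Ss Hs] := IH (fun i im => HR i (ltnW im)).
have [u Hu] := HR m (ltnSn m).
exists (rcons s u) => [|i]; first by rewrite size_rcons Ss.
rewrite ltnS leq_eqVlt nth_rcons Ss => /orP[/eqP ->|im]; first by rewrite ltnn eqxx.
by rewrite im; apply: Hs.
Qed.

Lemma card_braids_reduced n (T : finType) (A : {pred T}) (phi : T -> nat -> nat)
    (P : seq nat -> Prop) :
  {in A, forall t, perm_below n (phi t)} ->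
  {in A &, forall s t, eq_below n (phi s) (phi t) -> s = t} ->
  (forall w, P w <-> reduced n w /\ exists2 t, t \in A & eq_below n (word_perm w) (phi t)) ->
  card_braids n P #|A|.
Proof.
move=> phi_perm phi_inj HP; case: (pickP A) => [t0 _|A0]; last first.
  exists [::]; split=> //; first by rewrite eq_card0.
    by move=> a b /andP[_].
  by move=> w /(HP w).1 [_ [t]]; rewrite unfold_in A0.
have nthA i : i < #|A| -> nth t0 (enum A) i \in A.
  by move=> iA; rewrite -mem_enum mem_nth // -cardE.
have [ws Sws Hws] : exists2 ws, size ws = #|A| & forall i, i < #|A| ->
    reduced n (nth [::] ws i) /\ eq_below n (word_perm (nth [::] ws i)) (phi (nth t0 (enum A) i)).
  apply: (@nth_choice _ [::] (fun i w =>
    reduced n w /\ eq_below n (word_perm w) (phi (nth t0 (enum A) i)))) => i iA.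
  have [w Hw Ew] := reduced_word_exists (phi_perm _ (nthA i iA)).
  by exists w.
exists ws; split=> //.
- move=> w /(nthP [::]) [i]; rewrite Sws => iA <-; have [Hw Ew] := Hws i iA.
  by apply: (HP _).2; split=> //; exists (nth t0 (enum A) i); first exact: nthA.
- move=> a b /andP[ab]; rewrite Sws => bA ws_ab.
  have aA : a < #|A| by lia.
  have [[_ Ea] [_ Eb]] := (Hws a aA, Hws b bA).
  have : nth t0 (enum A) a = nth t0 (enum A) b.
    apply: phi_inj; rewrite ?nthA // => x xn.
    by rewrite -Ea // -Eb // (beq_word_perm ws_ab).
  by move/eqP; rewrite nth_uniq ?enum_uniq -?cardE //; lia.
- move=> w /(HP w).1 [Hw [t tA Ew]].
  have iA : index t (enum A) < #|A| by rewrite cardE index_mem mem_enum.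
  have [Hi Ei] := Hws _ iA.
  exists (nth [::] ws (index t (enum A))); first by rewrite mem_nth // Sws.
  apply: matsumoto => // x xn.
  by rewrite Ew // Ei // nth_index // mem_enum.
Qed.

Lemma perm_below_map_iota n p : perm_below n p -> perm_eq (map p (iota 0 n)) (iota 0 n).
Proof.
move=> [p_lt p_inj].
have p_uniq : uniq (map p (iota 0 n)).
  by rewrite map_inj_in_uniq ?iota_uniq // => x y; rewrite !mem_iota; apply: p_inj.
have p_sub : {subset map p (iota 0 n) <= iota 0 n}.
  by move=> y /mapP [z]; rewrite !mem_iota /= => zn ->; apply: (p_lt z).
have [_ p_mem] := uniq_min_size p_uniq p_sub (eq_leq (esym (size_map _ _))).
exact: uniq_perm p_uniq (iota_uniq 0 n) p_mem.
Qed.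

Section PermOfInjection.
Variables (n k r : nat).
Hypothesis Hkr : k + r = n.

Definition image_seq (f : {ffun 'I_r -> 'I_n}) : seq nat := [seq val (f j) | j <- enum 'I_r].

Definition missed_seq (f : {ffun 'I_r -> 'I_n}) : seq nat :=
  [seq y <- iota 0 n | y \notin image_seq f].

(* One-line notation: the values missed by f in decreasing order, then f 0, ..., f (r-1). *)
Definition perm_of_inj (f : {ffun 'I_r -> 'I_n}) (x : nat) : nat :=
  nth x (rev (missed_seq f) ++ image_seq f) x.

Lemma sorted_rev_missed_seq f : sorted (fun x y => y < x) (rev (missed_seq f)).
Proof.
by rewrite rev_sorted; apply/sorted_filter/iota_ltn_sorted; apply: ltn_trans.
Qed.

Section Injective.
Variable f : {ffun 'I_r -> 'I_n}.
Hypothesis f_inj : injective f.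

Lemma image_seq_uniq : uniq (image_seq f).
Proof. by rewrite map_inj_uniq ?enum_uniq // => i j /val_inj/f_inj. Qed.

Lemma one_line_perm : perm_eq (rev (missed_seq f) ++ image_seq f) (iota 0 n).
Proof.
have image_lt x : x \in image_seq f -> x < n by case/mapP => j _ -> /=.
have image_perm : perm_eq [seq y <- iota 0 n | y \in image_seq f] (image_seq f).
  apply: uniq_perm; rewrite ?filter_uniq ?iota_uniq ?image_seq_uniq // => y.
  by rewrite mem_filter mem_iota; case: (boolP (y \in _)) => // /image_lt ->.
rewrite perm_sym -(perm_filterC (mem (image_seq f))) perm_catC.
by apply: perm_cat => //; rewrite perm_sym perm_rev.
Qed.

Lemma size_missed_seq : size (missed_seq f) = k.
Proof.
have := perm_size one_line_perm.
rewrite size_cat size_rev /image_seq size_map size_iota size_enum_ord -Hkr.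
by move/eqP; rewrite eqn_add2r => /eqP.
Qed.

Lemma perm_below_perm_of_inj : perm_below n (perm_of_inj f).
Proof.
have Hsize := perm_size one_line_perm; rewrite size_iota in Hsize.
split=> [x xn|x y xn yn]; rewrite /perm_of_inj.
  have : nth x (rev (missed_seq f) ++ image_seq f) x \in iota 0 n.
    by rewrite -(perm_mem one_line_perm) mem_nth ?Hsize.
  by rewrite mem_iota.
rewrite (set_nth_default 0 x) ?Hsize // (set_nth_default 0 y) ?Hsize //.
by move/eqP; rewrite nth_uniq ?Hsize ?(perm_uniq one_line_perm) ?iota_uniq // => /eqP.
Qed.

Lemma perm_of_inj_tail (j : 'I_r) : perm_of_inj f (k + j) = f j.
Proof.
rewrite /perm_of_inj nth_cat size_rev size_missed_seq ltnNge leq_addr /= addKn.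
by rewrite (nth_map j) ?size_enum_ord // nth_ord_enum.
Qed.

Lemma perm_of_inj_desc a : 0 < a < k -> perm_of_inj f a < perm_of_inj f a.-1.
Proof.
move=> Ha; have Hs : size (rev (missed_seq f)) = k by rewrite size_rev size_missed_seq.
rewrite /perm_of_inj !nth_cat Hs ifT ?ifT; try lia.
rewrite (set_nth_default 0 a) ?(set_nth_default 0 a.-1) ?Hs; try lia.
move/(sortedP 0): (sorted_rev_missed_seq f) => /(_ a.-1).
by rewrite prednK ?Hs; [apply; lia|lia].
Qed.

End Injective.

Lemma perm_of_inj_inj (f g : {ffun 'I_r -> 'I_n}) : injective f -> injective g ->
  eq_below n (perm_of_inj f) (perm_of_inj g) -> f = g.
Proof.
move=> f_inj g_inj fg; apply/ffunP => j; apply: val_inj => /=.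
rewrite -(perm_of_inj_tail f_inj) -(perm_of_inj_tail g_inj); apply: fg.
by have := ltn_ord j; lia.
Qed.

Lemma perm_of_inj_onto p : perm_below n p -> (forall a, 0 < a < k -> p a < p a.-1) ->
  exists2 f : {ffun 'I_r -> 'I_n}, injective f & eq_below n p (perm_of_inj f).
Proof.
move=> Hp desc; have [p_lt p_inj] := Hp.
have tail_lt (j : 'I_r) : k + j < n by have := ltn_ord j; lia.
pose f := [ffun j => Ordinal (p_lt _ (tail_lt j))].
have f_inj : injective f.
  move=> i j /(congr1 val); rewrite !ffunE /= => /(p_inj _ _ (tail_lt i) (tail_lt j)) ij.
  by apply: val_inj => /=; lia.
exists f => //.
have p_cat : map p (iota 0 k) ++ image_seq f = map p (iota 0 n).
  rewrite -Hkr iotaD map_cat add0n; congr (_ ++ _).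
  rewrite /image_seq -[in RHS](addn0 k) iotaDl -val_enum_ord -!map_comp.
  by apply: eq_map => j; rewrite /= ffunE.
have cat_perm : perm_eq (map p (iota 0 k) ++ image_seq f) (iota 0 n).
  by rewrite p_cat; apply: perm_below_map_iota.
have head_eq : map p (iota 0 k) = rev (missed_seq f).
  apply: (irr_sorted_eq (leT := fun x y => y < x)) => [x y z|x|||x].
  - by move=> /[swap]; apply: ltn_trans.
  - exact: ltnn.
  - apply/(sortedP 0) => i; rewrite size_map size_iota => ik.
    by rewrite !(nth_map 0) ?size_iota ?nth_iota ?add0n; try apply: desc; lia.
  - exact: sorted_rev_missed_seq.
  have : uniq (map p (iota 0 k) ++ image_seq f) by rewrite (perm_uniq cat_perm) iota_uniq.
  rewrite cat_uniq => /and3P[_ /hasPn disjoint _].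
  rewrite mem_rev mem_filter -(perm_mem cat_perm) mem_cat.
  by case: (boolP (x \in image_seq f)) => [/disjoint/negbTE ->|_]; rewrite ?orbF.
move=> x xn; rewrite /perm_of_inj -head_eq p_cat (nth_map 0) ?size_iota //.
by rewrite nth_iota.
Qed.

End PermOfInjection.

Theorem proposition4p4 (n r : nat) :
  1 <= r <= n -> b_n2_is n (delta (n - r)) (n`! %/ (n - r)`!).
Proof.
move=> /andP[_ rn]; have kn : n - r <= n := leq_subr r n.
have Hkr : n - r + r = n by rewrite subnK.
rewrite -ffact_factd //.
have -> : n ^_ r = #|[pred f : {ffun 'I_r -> 'I_n} | injectiveb f]|.
  by rewrite -cardsE card_inj_ffuns !card_ord.
apply: (card_braids_reduced (phi := @perm_of_inj n r)).
- by move=> f; rewrite inE => /injectiveP; apply: perm_below_perm_of_inj.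
- move=> f g; rewrite !inE => /injectiveP f_inj /injectiveP g_inj.
  exact: (perm_of_inj_inj Hkr f_inj g_inj).
move=> w; rewrite simple_braidE.
split=> [[Hw]|[Hw [f]]]; rewrite (normal_pair_delta kn Hw).
  move=> desc; have [f f_inj Ef] := perm_of_inj_onto Hkr (perm_below_word_perm Hw.1) desc.
  by split=> //; exists f; rewrite ?inE; first exact/injectiveP.
rewrite inE => /injectiveP f_inj Ef; split=> // a Ha.
by rewrite !Ef; [apply: perm_of_inj_desc Ha|lia|lia].
Qed.
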